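(* Let $L=8$ and let $B=2^s\ge 8$. Let $\alpha_0,\dots,\alpha_{B-1}$ be nonzero real LLRs of one list path at a single parity-check (SPC) constituent block, indexed so that $|\alpha_0|<|\alpha_1|<\cdots<|\alpha_{B-1}|$, and let $\beta\in\{0,1\}^B$ with $\beta_j=\frac{1-\mathrm{sgn}(\alpha_j)}{2}$. For an even-weight vector $\hat\beta\in\{0,1\}^B$ (a codeword of the SPC block) define $\Delta(\hat\beta)=\sum_{j=0}^{B-1}|\hat\beta_j-\beta_j|\,|\alpha_j|$. Define a set $\mathcal C$ of 13 even-weight vectors as follows. If $\sum_j\beta_j\equiv 0\pmod 2$: $\mathcal C$ consists of $\beta$; $\beta\oplus e_0\oplus e_t$ for $t=1,\dots,7$; $\beta\oplus e_1\oplus e_2$; $\beta\oplus e_1\oplus e_3$; $\beta\oplus e_1\oplus e_4$; $\beta\oplus e_2\oplus e_3$; $\beta\oplus e_0\oplus e_1\oplus e_2\oplus e_3$. If $\sum_j\beta_j\equiv 1\pmod 2$: $\mathcal C$ consists of $\beta\oplus e_t$ for $t=0,\dots,7$; $\beta\oplus e_0\oplus e_1\oplus e_2$; $\beta\oplus e_0\oplus e_1\oplus e_3$; $\beta\oplus e_0\oplus e_2\oplus e_3$; $\beta\oplus e_1\oplus e_2\oplus e_3$; $\beta\oplus e_0\oplus e_1\oplus e_4$. Then the $L=8$ surviving sub-paths of this path can be obtained from $\mathcal C$: there is a set $S\subseteq\mathcal C$ with $|S|=8$ such that $\Delta(v)\le\Delta(w)$ for all $v\in S$ and all even-weight $w\in\{0,1\}^B\setminus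 S$. Consequently, in one-time path extension of all 8 list paths followed by pruning to the 8 paths of smallest path metric, restricting each path's extensions to these 13 error patterns incurs no loss.
   Context: Setting: successive-cancellation list (SCL) decoding of a polar code with list size $L$. An SPC constituent block of length $B$ is one whose valid outputs are exactly the vectors $\hat\beta\in\{0,1\}^B$ with $\sum_j\hat\beta_j\equiv 0\pmod 2$. Each list path $l$ has a path metric $\mathrm{PM}^l$; extending it by block output $\hat\beta$ gives new path metric $\mathrm{PM}^l+\Delta(\hat\beta)$, and after extension the $L$ extended paths (over all parent paths) with smallest path metric survive. $e_p\in\{0,1\}^B$ has a $1$ in position $p$ (positions indexed $0,\dots,B-1$ in the sorted order above) and $0$ elsewhere; $\oplus$ is componentwise XOR. *)

From HB Require Import structures.
From mathcomp Require Import all_boot all_order all_algebra.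
Set Implicit Arguments. Unset Strict Implicit. Unset Printing Implicit Defensive.
Import Order.TTheory GRing.Theory Num.Theory.
Local Open Scope ring_scope.

Notation bvec B := {ffun 'I_B -> bool}.

Definition even_weight (B : nat) (v : bvec B) : bool :=
  ~~ odd (\sum_(j < B) (v j : nat))%N.

Definition xorv (B : nat) (u v : bvec B) : bvec B := [ffun j => u j (+) v j].

(* unit vector e_p (p a natural-number position; 0 everywhere if p >= B) *)
Definition evec (B : nat) (p : nat) : bvec B := [ffun j : 'I_B => nat_of_ord j == p].

Definition hard_dec (R : realFieldType) (B : nat) (alpha : 'I_B -> R) : bvec B :=
  [ffun j => alpha j < 0].

Definition Delta (R : realFieldType) (B : nat) (alpha : 'I_B -> R) (v : bvec B) : R :=
  \sum_(j < B) ((v j != hard_dec alpha j)%:R * `|alpha j|).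

Definition candset (R : realFieldType) (B : nat) (alpha : 'I_B -> R) : {set bvec B} :=
  let b := hard_dec alpha in
  let f (ps : seq nat) := foldl (fun v p => xorv v (evec B p)) b ps in
  if even_weight b then
    [set f [::]; f [:: 0; 1]; f [:: 0; 2]; f [:: 0; 3]; f [:: 0; 4];
         f [:: 0; 5]; f [:: 0; 6]; f [:: 0; 7];
         f [:: 1; 2]; f [:: 1; 3]; f [:: 1; 4]; f [:: 2; 3]; f [:: 0; 1; 2; 3]]%N
  else
    [set f [:: 0]; f [:: 1]; f [:: 2]; f [:: 3]; f [:: 4]; f [:: 5]; f [:: 6]; f [:: 7];
         f [:: 0; 1; 2]; f [:: 0; 1; 3]; f [:: 0; 2; 3]; f [:: 1; 2; 3]; f [:: 0; 1; 4]]%N.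

Definition sorted_llrs (R : realFieldType) (B : nat) (alpha : 'I_B -> R) : Prop :=
  (forall j, alpha j != 0) /\
  (forall i j : 'I_B, (nat_of_ord i < nat_of_ord j)%N -> `|alpha i| < `|alpha j|).

From HB Require Import structures.
From mathcomp Require Import all_boot all_order all_algebra.
Set Implicit Arguments. Unset Strict Implicit. Unset Printing Implicit Defensive.
Import Order.TTheory GRing.Theory Num.Theory.
Local Open Scope ring_scope.

(* Write an even-weight output w as [beta] plus an error pattern [y]; its cost
   is Delta(w) = sum_j y_j |alpha_j|. Split [y] into its restriction [x] to the
   eight least reliable positions and the number [r] of remaining flips, each
   costing more than |alpha_7|. A candidate [beta + e_P], P a subset of {0..7},
   costs sum_(t in P) |alpha_t|; by Abel summation against the increasing
   weights |alpha_t| it costs at most Delta(w) as soon as the suffix counts of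
   P are dominated by those of x with r flips placed at position 7. An
   exhaustive check over x in {0,1}^8 and r <= 5 shows that either w is itself
   a candidate or at least eight candidates cost no more than w, so the eight
   cheapest candidates are among the cheapest outputs. For the list, the same
   ranking argument runs on the disjoint union of the candidate sets of all
   paths, the costs being shifted by the path metrics. *)

Section BestSubset.
Variables (disp : Order.disp_t) (R : orderType disp) (T : finType).
Variables (A : {set T}) (f : T -> R).

Definition rank_covered (k : nat) (w : T) : bool :=
  (w \in A) || (k <= #|[set c in A | (f c <= f w)%O]|)%N.

Lemma exists_smallest_subset k : (k <= #|A|)%N ->
  exists S : {set T}, [/\ S \subset A, #|S| = k &
    forall v w, v \in S -> w \in A -> w \notin S -> (f v <= f w)%O].
Proof.
elim: k => [|k IHk] le_kA.
  by exists set0; split=> [||v w]; rewrite ?sub0set ?cards0 ?inE.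
have [S [SA cardS minS]] := IHk (ltnW le_kA).
have /card_gt0P [i0 i0AS] : (0 < #|A :\: S|)%N.
  by rewrite cardsD (setIidPr SA) cardS subn_gt0.
case: (arg_minP f i0AS) => m /setDP [mA mS] minm.
exists (m |: S); split.
- by rewrite subUset sub1set mA SA.
- by rewrite cardsU1 mS cardS.
- move=> v w; rewrite !inE => /orP [/eqP -> | vS] wA /norP [wm wS].
    by apply: minm; apply/setDP.
  exact: minS.
Qed.

Lemma exists_best_subset k (P : pred T) :
  (k <= #|A|)%N -> (forall w, P w -> rank_covered k w) ->
  exists S : {set T}, [/\ S \subset A, #|S| = k &
    forall v w, v \in S -> P w -> w \notin S -> (f v <= f w)%O].
Proof.
move=> le_kA covered; have [S [SA cardS minS]] := exists_smallest_subset le_kA.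
exists S; split=> // v w vS /covered /orP [wA | many] wS; first exact: minS.
have [D_S | /subsetPn [c /setIdP [cA le_cw] cS]] :=
  boolP ([set c in A | (f c <= f w)%O] \subset S).
  have D_eq : [set c in A | (f c <= f w)%O] = S by apply/eqP; rewrite eqEcard D_S cardS.
  by move: vS; rewrite -D_eq inE => /andP [].
exact: le_trans (minS _ _ vS cA cS) le_cw.
Qed.

End BestSubset.

Definition disjoint_union (I T : finType) (C : I -> {set T}) : {set I * T} :=
  [set p | p.2 \in C p.1].

Lemma card_disjoint_union_ge (I T : finType) (C : I -> {set T}) l :
  (#|C l| <= #|disjoint_union C|)%N.
Proof.
have pair_inj : injective (@pair I T l) by move=> ? ? [].
rewrite -(card_imset _ pair_inj); apply/subset_leq_card/subsetP => _ /imsetP [c cC ->].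
by rewrite inE.
Qed.

Lemma rank_covered_disjoint_union (R : realDomainType) (I T : finType)
    (C : I -> {set T}) (g : I -> T -> R) (c : I -> R) k l w :
  rank_covered (C l) (g l) k w ->
  rank_covered (disjoint_union C) (fun p => c p.1 + g p.1 p.2) k (l, w).
Proof.
case/orP => [wC | many]; apply/orP; [by left; rewrite inE | right].
have pair_inj : injective (@pair I T l) by move=> ? ? [].
apply: leq_trans many _; rewrite -(card_imset _ pair_inj).
apply/subset_leq_card/subsetP => _ /imsetP [u /setIdP [uC le_uw] ->].
by rewrite !inE /= uC lerD2l.
Qed.

Lemma ler_sum_suffix (R : numDomainType) n (y z a : nat -> R) :
  (forall t, (t < n)%N -> 0 <= a t) ->
  (forall s t, (s <= t < n)%N -> a s <= a t) ->
  (forall m, (m < n)%N -> \sum_(m <= i < n) y i <= \sum_(m <= i < n) z i) ->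
  \sum_(0 <= i < n) y i * a i <= \sum_(0 <= i < n) z i * a i.
Proof.
elim: n y z a => [|n IHn] y z a a_ge0 a_mono yz; first by rewrite !big_geq.
(* Abel summation: peel off the contribution of [a 0] on all terms. *)
have abel x : \sum_(0 <= i < n.+1) x i * a i =
    (\sum_(0 <= i < n.+1) x i) * a 0 + \sum_(0 <= i < n) x i.+1 * (a i.+1 - a 0).
  rewrite !big_nat_recl // mulrDl mulr_suml -addrA -big_split /=; congr (_ + _).
  by apply: eq_bigr => i _; rewrite -mulrDr addrC subrK.
rewrite !abel; apply: lerD; first by apply: ler_wpM2r; [exact: a_ge0 | exact: yz].
apply: IHn => [t tn | s t /andP [st tn] | m mn].
- by rewrite subr_ge0; apply: a_mono.
- by rewrite lerD2r; apply: a_mono; rewrite !ltnS st.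
- by have := yz m.+1 mn; rewrite !big_add1.
Qed.

(* Written with [sumn] rather than big operators, which are sealed, so that
   [vm_compute] can decide it. *)
Definition suffix_dominated n (y z : nat -> nat) : bool :=
  all (fun m => sumn (map y (index_iota m n)) <= sumn (map z (index_iota m n)))%N
      (iota 0 n).

Lemma ler_sum_suffix_dominated (R : numDomainType) n (y z : nat -> nat) (a : nat -> R) :
  (forall t, (t < n)%N -> 0 <= a t) ->
  (forall s t, (s <= t < n)%N -> a s <= a t) ->
  suffix_dominated n y z ->
  \sum_(i < n) (y i)%:R * a i <= \sum_(i < n) (z i)%:R * a i.
Proof.
move=> a_ge0 a_mono /allP yz.
have := ler_sum_suffix (y := fun i => (y i)%:R) (z := fun i => (z i)%:R) a_ge0 a_mono.
rewrite !big_mkord; apply=> m mn; rewrite -!natr_sum ler_nat.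
by have := yz m; rewrite mem_iota mn => /(_ isT); rewrite !sumnE !big_map.
Qed.

Fixpoint bitseqs n : seq (seq bool) :=
  if n is n'.+1 then [seq b :: x | b <- [:: true; false], x <- bitseqs n'] else [:: [::]].

Lemma mem_bitseqs x : x \in bitseqs (size x).
Proof. by elim: x => // b x IHx; apply: allpairs_f => //; case: b. Qed.

Definition patterns (even_beta : bool) : seq (seq nat) :=
  if even_beta then
    [:: [::]; [:: 0; 1]; [:: 0; 2]; [:: 0; 3]; [:: 0; 4]; [:: 0; 5]; [:: 0; 6]; [:: 0; 7];
        [:: 1; 2]; [:: 1; 3]; [:: 1; 4]; [:: 2; 3]; [:: 0; 1; 2; 3]]%N
  else
    [:: [:: 0]; [:: 1]; [:: 2]; [:: 3]; [:: 4]; [:: 5]; [:: 6]; [:: 7];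
        [:: 0; 1; 2]; [:: 0; 1; 3]; [:: 0; 2; 3]; [:: 1; 2; 3]; [:: 0; 1; 4]]%N.

Definition pattern_bits (ps : seq nat) : seq bool :=
  [seq odd (count_mem t ps) | t <- iota 0 8].

(* The [r] errors beyond position 7 are all charged at position 7, the
   cheapest place they could occupy. *)
Definition profile (x : seq bool) (r t : nat) : nat := (nth false x t + (t == 7) * r)%N.

Definition dominated (ps : seq nat) (x : seq bool) (r : nat) : bool :=
  suffix_dominated 8 (fun t => nth false (pattern_bits ps) t) (profile x r).

Definition covered (even_beta : bool) (x : seq bool) (r : nat) : bool :=
  (odd (count id x + r)%N == ~~ even_beta) ==>
  (r == 0) && (x \in map pattern_bits (patterns even_beta))
  || (8 <= count (fun ps => dominated ps x r) (patterns even_beta))%N.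

Lemma patterns_cover even_beta :
  all (fun x => all (covered even_beta x) (iota 0 6)) (bitseqs 8).
Proof. by case: even_beta; vm_compute. Qed.

Lemma uniq_pattern_bits even_beta : uniq (map pattern_bits (patterns even_beta)).
Proof. by case: even_beta. Qed.

Lemma patterns_low even_beta : all (all (fun p => p < 8)%N) (patterns even_beta).
Proof. by case: even_beta. Qed.

Lemma size_patterns even_beta : size (patterns even_beta) = 13%N.
Proof. by case: even_beta. Qed.

Definition flip_pattern B (b : bvec B) (ps : seq nat) : bvec B :=
  foldl (fun v p => xorv v (evec B p)) b ps.

Lemma flip_patternE B (b : bvec B) ps j :
  flip_pattern b ps j = b j (+) odd (count_mem (j : nat) ps).
Proof.
elim: ps b => [|p ps IHps] b /=; first by rewrite addbF.
by rewrite IHps !ffunE oddD addbA [p == _]eq_sym; case: (_ == p).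
Qed.

Lemma mem_candset (R : realFieldType) B (alpha : 'I_B -> R) v :
  (v \in candset alpha) =
  (v \in map (flip_pattern (hard_dec alpha)) (patterns (even_weight (hard_dec alpha)))).
Proof. by rewrite /candset /patterns; case: ifP => _; rewrite !inE !orbA. Qed.

Section ErrorPattern.
Variables (B : nat) (hB : (8 <= B)%N) (b : bvec B).

Definition low_pos (t : nat) : 'I_B := widen_ord hB (inord t : 'I_8).

Lemma low_posK t : (t < 8)%N -> low_pos t = t :> nat.
Proof. by move=> t_lt8; rewrite /= inordK. Qed.

Lemma big_split_low (V : Type) (idx : V) (op : Monoid.com_law idx) (F : 'I_B -> V) :
  \big[op/idx]_(j < B) F j =
  op (\big[op/idx]_(t < 8) F (low_pos t)) (\big[op/idx]_(j < B | (8 <= j)%N) F j).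
Proof.
rewrite (bigID (fun j : 'I_B => (j < 8)%N)) /= (big_ord_narrow hB).
congr (op _ _); last by apply: eq_bigl => j; rewrite -leqNgt.
by apply: eq_bigr => t _; congr (F _); apply: val_inj; rewrite /= inordK.
Qed.

Definition errors (v : bvec B) (j : 'I_B) : bool := v j != b j.

Definition head_bits (v : bvec B) : seq bool := [seq errors v (low_pos t) | t <- iota 0 8].

Definition tail_errors (v : bvec B) : nat := \sum_(j < B | (8 <= j)%N) errors v j.

Lemma nth_head_bits v (t : 'I_8) : nth false (head_bits v) t = errors v (low_pos t).
Proof. by rewrite (nth_map 0%N) ?size_iota // nth_iota. Qed.

Lemma count_head_bits v : count id (head_bits v) = (\sum_(t < 8) errors v (low_pos t))%N.
Proof.
by rewrite count_map -sumn_count sumnE big_map -[iota 0 8]/(index_iota 0 8) big_mkord.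
Qed.

Lemma errors_inj v w : errors v =1 errors w -> v = w.
Proof.
move=> vw; apply/ffunP => j; have := vw j; rewrite /errors.
by case: (v j); case: (w j); case: (b j).
Qed.

Lemma errors_flip_pattern ps j : errors (flip_pattern b ps) j = odd (count_mem (j : nat) ps).
Proof. by rewrite /errors flip_patternE; case: (b j); case: odd. Qed.

Lemma head_bits_flip_pattern ps : head_bits (flip_pattern b ps) = pattern_bits ps.
Proof.
apply/eq_in_map => t; rewrite mem_iota => /andP [_ t_lt8].
by rewrite errors_flip_pattern low_posK.
Qed.

Lemma uniq_flip_pattern pats :
  uniq (map pattern_bits pats) -> uniq (map (flip_pattern b) pats).
Proof.
move=> uniq_bits; apply: (@map_uniq _ _ head_bits).
by rewrite -map_comp (eq_map head_bits_flip_pattern).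
Qed.

Lemma flip_pattern_eq v ps :
  all (fun p => p < 8)%N ps -> tail_errors v = 0%N -> head_bits v = pattern_bits ps ->
  v = flip_pattern b ps.
Proof.
move=> ps_low no_tail head_eq; apply: errors_inj => j; rewrite errors_flip_pattern.
have [j_lt8 | j_ge8] := ltnP j 8.
  have j_low : low_pos j = j by apply: val_inj; exact: low_posK.
  rewrite -{1}j_low -(nth_head_bits v (Ordinal j_lt8)) head_eq.
  by rewrite (nth_map 0%N) ?size_iota // nth_iota.
have /eqP := no_tail; rewrite sum_nat_eq0 => /forallP /(_ j); rewrite j_ge8 /= => /eqP.
case: (errors v j) => // _; apply/esym/negbTE; rewrite (count_memPn _) //.
by apply/negP => /(allP ps_low); rewrite ltnNge j_ge8.
Qed.

Lemma odd_errors v :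
  odd (count id (head_bits v) + tail_errors v) =
  odd (\sum_(j < B) v j) (+) odd (\sum_(j < B) b j).
Proof.
rewrite count_head_bits -big_split_low.
rewrite !(big_morph odd oddD (erefl (odd 0))) -big_split /=.
by apply: eq_bigr => j _; rewrite /errors; case: (v j); case: (b j).
Qed.

End ErrorPattern.

Section DeltaBounds.
Variables (R : realFieldType) (B : nat) (hB : (8 <= B)%N) (alpha : 'I_B -> R).
Local Notation beta := (hard_dec alpha).
Local Notation head_bits := (head_bits hB beta).
Local Notation tail_errors := (tail_errors beta).
Let a (t : nat) := `|alpha (low_pos hB t)|.

Lemma Delta_split v :
  Delta alpha v = \sum_(t < 8) (nth false (head_bits v) t)%:R * a t
                  + \sum_(j < B | (8 <= j)%N) (errors beta v j)%:R * `|alpha j|.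
Proof.
rewrite /Delta (big_split_low hB); congr (_ + _).
by apply: eq_bigr => t _; rewrite nth_head_bits.
Qed.

Lemma Delta_flip_pattern ps : all (fun p => p < 8)%N ps ->
  Delta alpha (flip_pattern beta ps) = \sum_(t < 8) (nth false (pattern_bits ps) t)%:R * a t.
Proof.
move=> ps_low; rewrite Delta_split head_bits_flip_pattern.
rewrite [X in _ + X]big1 ?addr0 // => j j_ge8.
rewrite errors_flip_pattern (count_memPn _) ?mul0r //.
by apply/negP => /(allP ps_low); rewrite ltnNge j_ge8.
Qed.

Lemma card_candset : (8 <= #|candset alpha|)%N.
Proof.
have uniq_cands := uniq_flip_pattern hB beta (uniq_pattern_bits (even_weight beta)).
by rewrite (eq_card (mem_candset alpha)) (card_uniqP uniq_cands) size_map size_patterns.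
Qed.

Hypothesis abs_alpha_lt : forall i j : 'I_B, (i < j)%N -> `|alpha i| < `|alpha j|.

Lemma abs_low_mono s t : (s <= t < 8)%N -> a s <= a t.
Proof.
case/andP; rewrite leq_eqVlt => /orP [/eqP -> // | s_lt_t t_lt8].
by apply/ltW/abs_alpha_lt; rewrite !low_posK // (ltn_trans s_lt_t).
Qed.

Lemma sum_profile (x : seq bool) r (c : nat -> R) :
  \sum_(t < 8) (profile x r t)%:R * c t = \sum_(t < 8) (nth false x t)%:R * c t + r%:R * c 7%N.
Proof.
rewrite /profile; under eq_bigr do rewrite natrD mulrDl.
rewrite big_split /=; congr (_ + _).
rewrite (bigD1 ord_max) //= big1 ?addr0 ?mul1n // => t /negbTE.
by rewrite -val_eqE /= => ->; rewrite mul0n mul0r.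
Qed.

Lemma Delta_ge_profile v r : (r <= tail_errors v)%N ->
  \sum_(t < 8) (profile (head_bits v) r t)%:R * a t <= Delta alpha v.
Proof.
move=> r_le; rewrite sum_profile Delta_split lerD2l.
apply: (@le_trans _ _ ((tail_errors v)%:R * a 7%N)).
  by rewrite /a; apply: ler_wpM2r; rewrite ?ler_nat.
rewrite natr_sum mulr_suml; apply: ler_sum => j j_ge8; apply: ler_wpM2l => //.
by apply/ltW/abs_alpha_lt; rewrite low_posK.
Qed.

Lemma Delta_flip_pattern_le v ps r :
  all (fun p => p < 8)%N ps -> (r <= tail_errors v)%N -> dominated ps (head_bits v) r ->
  Delta alpha (flip_pattern beta ps) <= Delta alpha v.
Proof.
move=> ps_low r_le dom; rewrite Delta_flip_pattern //; apply: le_trans (Delta_ge_profile r_le).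
apply: ler_sum_suffix_dominated dom => [t _ | s t]; first exact: normr_ge0.
exact: abs_low_mono.
Qed.

Lemma card_dominated_candidates v r : (r <= tail_errors v)%N ->
  (count (fun ps => dominated ps (head_bits v) r) (patterns (even_weight beta))
   <= #|[set c in candset alpha | (Delta alpha c <= Delta alpha v)%R]|)%N.
Proof.
move=> r_le; set pats := patterns _.
set cands := map (flip_pattern beta) (filter (fun ps => dominated ps (head_bits v) r) pats).
have uniq_cands : uniq cands.
  apply: (uniq_flip_pattern hB); apply: (subseq_uniq _ (uniq_pattern_bits (even_weight beta))).
  exact/map_subseq/filter_subseq.
rewrite -size_filter -(size_map (flip_pattern beta)) -(card_uniqP uniq_cands).
apply/subset_leq_card/subsetP => c /mapP [ps]; rewrite mem_filter => /andP [dom ps_in] ->.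
rewrite inE mem_candset map_f //=; apply: Delta_flip_pattern_le dom => //.
exact: (allP (patterns_low _) _ ps_in).
Qed.

Lemma candset_rank_covered v :
  even_weight v -> rank_covered (candset alpha) (Delta alpha) 8 v.
Proof.
move=> even_v; set tail := tail_errors v.
(* Dominance is monotone in [r] and [covered] only looks at its parity, so a
   tail of six or more errors may be replaced by four or five of them. *)
pose r := if (tail < 6)%N then tail else (4 + odd tail)%N.
have r_le : (r <= tail)%N.
  by rewrite /r; case: (ltnP tail 6) => // /(leq_trans _)-> //; case: (odd tail).
have r_odd : odd r = odd tail by rewrite /r; case: (ltnP tail 6) => //; case: (odd tail).
have r_lt6 : (r < 6)%N by rewrite /r; case: (ltnP tail 6) => //; case: (odd tail).
have r_eq0 : r = 0%N -> tail = 0%N by rewrite /r; case: (ltnP tail 6) => //; case: (odd tail).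
have x_in : head_bits v \in bitseqs 8.
  by have := mem_bitseqs (head_bits v); rewrite size_map size_iota.
have parity : odd (count id (head_bits v) + r) = ~~ even_weight beta.
  rewrite oddD r_odd -oddD odd_errors.
  by move: even_v; rewrite /even_weight => /negbTE ->; rewrite negbK.
have := allP (allP (patterns_cover (even_weight beta)) _ x_in) r.
rewrite mem_iota r_lt6 /covered parity eqxx => /(_ isT).
case/orP => [/andP [/eqP /r_eq0 no_tail /mapP [ps ps_in head_eq]] | many].
  have ps_low := allP (patterns_low _) _ ps_in.
  by apply/orP; left; rewrite mem_candset (flip_pattern_eq ps_low no_tail head_eq) map_f.
by apply/orP; right; apply: leq_trans many (card_dominated_candidates r_le).
Qed.

End DeltaBounds.

Theorem proposition2 (R : realFieldType) (s : nat) (hs : (8 <= 2 ^ s)%N) :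
  (* single path: the 8 best even-weight outputs can be taken inside C *)
  (forall alpha : 'I_(2 ^ s) -> R, sorted_llrs alpha ->
     exists S : {set bvec (2 ^ s)},
       [/\ S \subset candset alpha, #|S| = 8%N &
           forall v w : bvec (2 ^ s), v \in S -> even_weight w -> w \notin S ->
             Delta alpha v <= Delta alpha w])
  /\
  (* consequence: list extension of L = 8 paths and pruning to the 8 smallest
     path metrics loses nothing when each path uses only its 13 patterns *)
  (forall (alphas : 'I_8 -> 'I_(2 ^ s) -> R) (PM : 'I_8 -> R),
     (forall l, sorted_llrs (alphas l)) ->
     exists T : {set 'I_8 * bvec (2 ^ s)},
       [/\ #|T| = 8%N,
           forall l v, (l, v) \in T -> v \in candset (alphas l) &
           forall l v l' w, (l, v) \in T -> even_weight w -> (l', w) \notin T ->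
             PM l + Delta (alphas l) v <= PM l' + Delta (alphas l') w]).
Proof.
split=> [alpha [_ alpha_lt] | alphas PM alphas_sorted].
  apply: exists_best_subset (card_candset hs alpha) _ => w.
  exact: candset_rank_covered.
pose A := disjoint_union (fun l => candset (alphas l)).
pose cost p := PM p.1 + Delta (alphas p.1) p.2.
have card_A : (8 <= #|A|)%N.
  exact: leq_trans (card_candset hs (alphas ord0)) (card_disjoint_union_ge _ ord0).
have covered (p : 'I_8 * bvec (2 ^ s)) : even_weight p.2 -> rank_covered A cost 8 p.
  case: p => l w /= even_w.
  apply: (rank_covered_disjoint_union (g := fun l => Delta (alphas l)) PM).
  have [_ alpha_lt] := alphas_sorted l.
  exact: (candset_rank_covered hs alpha_lt even_w).
have [T [TA cardT bestT]] := exists_best_subset card_A covered.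
exists T; split=> // [l v lvT | l v l' w lvT even_w lwT]; last exact: (bestT (l, v) (l', w)).
by have := subsetP TA _ lvT; rewrite inE.
Qed.
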